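(* Let $\sigma\in\mathbf{SL}(2,\mathbb{C})$, $z\in\mathbb{C}$, $\lambda>0$, $g=n[z]a[\lambda]$ and $P=z+\lambda j\in\mathbb{H}^3$. Then \[\Phi_{T(\sigma g)}=B\circ R(d\sigma,P)\circ B,\qquad B=\begin{pmatrix}1&0&0\\0&1&0\\0&0&-1\end{pmatrix}.\]
   Context: $\mathbb{H}^3=\{z+\lambda j:z\in\mathbb{C},\lambda>0\}\subset\mathbb{R}^3$ with $\mathbf{SL}(2,\mathbb{C})$ acting by $\begin{pmatrix}a&b\\c&d\end{pmatrix}(z+\lambda j)=\frac{(az+b)(\bar c\bar z+\bar d)+a\bar c\lambda^2}{|cz+d|^2+|c|^2\lambda^2}+\frac{\lambda}{|cz+d|^2+|c|^2\lambda^2}j$; $\mathrm{Im}(z+\lambda j):=\lambda$. $n[z]=\begin{pmatrix}1&z\\0&1\end{pmatrix}$, $a[\mu]=\begin{pmatrix}\sqrt\mu&0\\0&1/\sqrt\mu\end{pmatrix}$ ($\mu>0$). Every $g\in\mathbf{SL}(2,\mathbb{C})$ has a unique Iwasawa decomposition $g=n[w]a[\mu]K$ with $w\in\mathbb{C},\mu>0,K\in\mathbf{SU}(2)$; $T(g):=K$. $\Phi:\mathbf{SU}(2)\to\mathbf{SO}(3)$ is the double cover given, for $A=\begin{pmatrix}\alpha&\beta\\-\bar\beta&\bar\alpha\end{pmatrix}$, by $\Phi_A=\begin{pmatrix}\mathrm{Re}(\alpha^2-\beta^2)&-\mathrm{Im}(\alpha^2+\beta^2)&2\mathrm{Re}(\alpha\beta)\\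 \mathrm{Im}(\alpha^2-\beta^2)&\mathrm{Re}(\alpha^2+\beta^2)&2\mathrm{Im}(\alpha\beta)\\ -2\mathrm{Re}(\bar\alpha\beta)&2\mathrm{Im}(\alpha\bar\beta)&|\alpha|^2-|\beta|^2\end{pmatrix}$. For $\sigma\in\mathbf{SL}(2,\mathbb{C})$ and $P=z+\lambda j$, $R(d\sigma,P)$ is the linear map of $\mathbb{R}^3$ defined by $R(d\sigma,P)v:=\frac{\lambda}{\mathrm{Im}\,\sigma P}\,d\sigma_P(v)$, where $d\sigma_P$ is the differential at $P$ of the map $\sigma:\mathbb{H}^3\to\mathbb{H}^3\subset\mathbb{R}^3$ (tangent spaces identified with $\mathbb{R}^3$), written as a matrix in the basis $e_1,e_2,e_3$ (directions $x,y,\lambda$). *)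

From Stdlib Require Import Reals Lra.
Open Scope R_scope.

Record Cx := mkC { re : R; im : R }.
Definition Cadd (u v : Cx) : Cx := mkC (re u + re v) (im u + im v).
Definition Copp (u : Cx) : Cx := mkC (- re u) (- im u).
Definition Cmul (u v : Cx) : Cx :=
  mkC (re u * re v - im u * im v) (re u * im v + im u * re v).
Definition Cconj (u : Cx) : Cx := mkC (re u) (- im u).
Definition CR (r : R) : Cx := mkC r 0.
Definition C0 : Cx := CR 0.
Definition C1 : Cx := CR 1.
Definition Cnorm2 (u : Cx) : R := re u * re u + im u * im u.
Definition Cscal (r : R) (u : Cx) : Cx := mkC (r * re u) (r * im u).

Record M2 := mkM2 { ma : Cx; mb : Cx; mc : Cx; md : Cx }.
Definition M2mul (X Y : M2) : M2 :=
  mkM2 (Cadd (Cmul (ma X) (ma Y)) (Cmul (mb X) (mc Y)))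
       (Cadd (Cmul (ma X) (mb Y)) (Cmul (mb X) (md Y)))
       (Cadd (Cmul (mc X) (ma Y)) (Cmul (md X) (mc Y)))
       (Cadd (Cmul (mc X) (mb Y)) (Cmul (md X) (md Y))).
Definition M2det (X : M2) : Cx := Cadd (Cmul (ma X) (md X)) (Copp (Cmul (mb X) (mc X))).
Definition M2adj (X : M2) : M2 :=
  mkM2 (Cconj (ma X)) (Cconj (mc X)) (Cconj (mb X)) (Cconj (md X)).
Definition M2id : M2 := mkM2 C1 C0 C0 C1.

Definition in_SL2C (X : M2) : Prop := M2det X = C1.
Definition in_SU2 (X : M2) : Prop := M2mul X (M2adj X) = M2id /\ M2det X = C1.

Definition nmat (z : Cx) : M2 := mkM2 C1 z C0 C1.
Definition amat (mu : R) : M2 := mkM2 (CR (sqrt mu)) C0 C0 (CR (/ sqrt mu)).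

(* g = n[w] a[mu] K is an Iwasawa decomposition of g (w in C, mu > 0, K in SU(2));
   T(g) is the K of the (unique) such decomposition. *)
Definition iwasawa (g : M2) (w : Cx) (mu : R) (K : M2) : Prop :=
  0 < mu /\ in_SU2 K /\ g = M2mul (M2mul (nmat w) (amat mu)) K.

Record V3 := mkV3 { v1 : R; v2 : R; v3 : R }.
Definition V3add (u v : V3) : V3 := mkV3 (v1 u + v1 v) (v2 u + v2 v) (v3 u + v3 v).
Definition V3sub (u v : V3) : V3 := mkV3 (v1 u - v1 v) (v2 u - v2 v) (v3 u - v3 v).
Definition V3norm (u : V3) : R := sqrt (v1 u * v1 u + v2 u * v2 u + v3 u * v3 u).
Definition V3nth (u : V3) (i : nat) : R :=
  match i with 0%nat => v1 u | 1%nat => v2 u | _ => v3 u end.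

(* 3x3 matrices, entries indexed by i j in {0,1,2} (row, column) *)
Definition Mat3 := nat -> nat -> R.
Definition mat3_apply (M : Mat3) (u : V3) : V3 :=
  mkV3 (M 0%nat 0%nat * v1 u + M 0%nat 1%nat * v2 u + M 0%nat 2%nat * v3 u)
       (M 1%nat 0%nat * v1 u + M 1%nat 1%nat * v2 u + M 1%nat 2%nat * v3 u)
       (M 2%nat 0%nat * v1 u + M 2%nat 1%nat * v2 u + M 2%nat 2%nat * v3 u).
Definition mat3_mul (M N : Mat3) : Mat3 :=
  fun i j => M i 0%nat * N 0%nat j + M i 1%nat * N 1%nat j + M i 2%nat * N 2%nat j.
Definition Bmat : Mat3 := fun i j =>
  match i, j with
  | 0%nat, 0%nat => 1 | 1%nat, 1%nat => 1 | 2%nat, 2%nat => -1 | _, _ => 0 end.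

Definition Phi (A : M2) : Mat3 :=
  let al := ma A in let be := mb A in
  let al2 := Cmul al al in let be2 := Cmul be be in
  let ab := Cmul al be in
  fun i j =>
  match i, j with
  | 0%nat, 0%nat => re (Cadd al2 (Copp be2))
  | 0%nat, 1%nat => - im (Cadd al2 be2)
  | 0%nat, 2%nat => 2 * re ab
  | 1%nat, 0%nat => im (Cadd al2 (Copp be2))
  | 1%nat, 1%nat => re (Cadd al2 be2)
  | 1%nat, 2%nat => 2 * im ab
  | 2%nat, 0%nat => - 2 * re (Cmul (Cconj al) be)
  | 2%nat, 1%nat => 2 * im (Cmul al (Cconj be))
  | 2%nat, 2%nat => Cnorm2 al - Cnorm2 be
  | _, _ => 0
  end.

(* point z + lambda j  <->  mkV3 (re z) (im z) lambda *)
Definition hpoint (z : Cx) (l : R) : V3 := mkV3 (re z) (im z) l.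

Definition act (s : M2) (P : V3) : V3 :=
  let z := mkC (v1 P) (v2 P) in
  let l := v3 P in
  let a := ma s in let b := mb s in let c := mc s in let d := md s in
  let den := Cnorm2 (Cadd (Cmul c z) d) + Cnorm2 c * (l * l) in
  let num := Cadd (Cmul (Cadd (Cmul a z) b) (Cadd (Cmul (Cconj c) (Cconj z)) (Cconj d)))
                  (Cscal (l * l) (Cmul a (Cconj c))) in
  mkV3 (re num / den) (im num / den) (l / den).

Definition Imh (P : V3) : R := v3 P.

Definition is_differential (f : V3 -> V3) (P : V3) (L : Mat3) : Prop :=
  forall eps, 0 < eps -> exists delta, 0 < delta /\
    forall h, 0 < V3norm h < delta ->
      V3norm (V3sub (V3sub (f (V3add P h)) (f P)) (mat3_apply L h)) <= eps * V3norm h.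

Definition is_R (s : M2) (P : V3) (M : Mat3) : Prop :=
  exists L, is_differential (act s) P L /\
    forall i j, (i < 3)%nat -> (j < 3)%nat ->
      M i j = Imh P / Imh (act s P) * L i j.

(* An element h of SL(2,C) with bottom row (r, s) has Iwasawa factor
   K = |(r,s)|^-1 [[conj s, -conj r], [r, s]]: K is unitary and its bottom row is
   sqrt(mu) (r, s). For h = sigma n[z] a[lambda] that row is (sqrt(lambda) c, (cz+d)/sqrt(lambda)),
   of squared norm D/lambda where D = |cz+d|^2 + |c|^2 lambda^2 is the denominator of the action.
   As Phi is quadratic, B Phi_K B = E/D for a matrix E quadratic in c and cz+d, while the
   Jacobian of the action at P is E/D^2 (using det sigma = 1) and Im(sigma P) = lambda/D. *)

From Stdlib Require Import Reals Lra Psatz Nsatz.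
From Coquelicot Require Import Coquelicot.
Open Scope R_scope.
Set Bullet Behavior "Strict Subproofs".

Section RealFilterdiff.
Context {V : NormedModule R_AbsRing} (p : V).

Lemma filterdiff_Rconst (c : R) : filterdiff (fun _ : V => c) (locally p) (fun _ => 0).
Proof. exact (filterdiff_const (V := R_NormedModule) c). Qed.

Lemma filterdiff_Rplus f g lf lg :
  filterdiff f (locally p) lf -> filterdiff g (locally p) lg ->
  filterdiff (fun q => f q + g q) (locally p) (fun h => lf h + lg h).
Proof. exact (filterdiff_plus_fct (V := R_NormedModule) f g lf lg). Qed.

Lemma filterdiff_Rminus f g lf lg :
  filterdiff f (locally p) lf -> filterdiff g (locally p) lg ->
  filterdiff (fun q => f q - g q) (locally p) (fun h => lf h - lg h).
Proof. exact (filterdiff_minus_fct (V := R_NormedModule) f g lf lg). Qed.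

Lemma filterdiff_Ropp f lf :
  filterdiff f (locally p) lf -> filterdiff (fun q => - f q) (locally p) (fun h => - lf h).
Proof. exact (filterdiff_opp_fct (V := R_NormedModule) f lf). Qed.

Lemma filterdiff_Rmult f g lf lg :
  filterdiff f (locally p) lf -> filterdiff g (locally p) lg ->
  filterdiff (fun q => f q * g q) (locally p) (fun h => lf h * g p + f p * lg h).
Proof.
  intros Hf Hg. apply (filterdiff_mult_fct (K := R_AbsRing) f g p lf lg Rmult_comm Hf Hg).
Qed.

Lemma filterdiff_Rinv f lf : filterdiff f (locally p) lf -> f p <> 0 ->
  filterdiff (fun q => / f q) (locally p) (fun h => - lf h / (f p)^2).
Proof.
  intros Hf Hfp.
  eapply filterdiff_ext_lin.
  - exact (filterdiff_comp' f Rinv p lf _ Hf (is_derive_inv id (f p) 1 (is_derive_id _) Hfp)).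
  - intros h. cbn. unfold scal; cbn; unfold mult; cbv [id]. field. exact Hfp.
Qed.

Lemma filterdiff_Rdiv f g lf lg :
  filterdiff f (locally p) lf -> filterdiff g (locally p) lg -> g p <> 0 ->
  filterdiff (fun q => f q / g q) (locally p)
    (fun h => lf h * / g p + f p * (- lg h / (g p)^2)).
Proof. intros Hf Hg Hgp. apply filterdiff_Rmult; [exact Hf | exact (filterdiff_Rinv g lg Hg Hgp)]. Qed.

End RealFilterdiff.

Definition R3 : Type := R * (R * R).
Definition V3_of (q : R3) : V3 := mkV3 (fst q) (fst (snd q)) (snd (snd q)).
Definition mat3_row (L : Mat3) (i : nat) (h : R3) : R :=
  L i 0%nat * fst h + L i 1%nat * fst (snd h) + L i 2%nat * snd (snd h).

Lemma filterdiff_coord1 (p : R3) : filterdiff (fun q : R3 => fst q) (locally p) fst.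
Proof. apply filterdiff_linear, is_linear_fst. Qed.

Lemma filterdiff_coord2 (p : R3) :
  filterdiff (fun q : R3 => fst (snd q)) (locally p) (fun h => fst (snd h)).
Proof.
  apply filterdiff_linear, (is_linear_comp (fun t : R3 => snd t) (fun t : R * R => fst t)).
  - apply is_linear_snd.
  - apply is_linear_fst.
Qed.

Lemma filterdiff_coord3 (p : R3) :
  filterdiff (fun q : R3 => snd (snd q)) (locally p) (fun h => snd (snd h)).
Proof.
  apply filterdiff_linear, (is_linear_comp (fun t : R3 => snd t) (fun t : R * R => snd t)).
  - apply is_linear_snd.
  - apply is_linear_snd.
Qed.

Ltac filterdiff_rational :=
  lazymatch goal with
  | |- filterdiff (fun q => fst q) _ _ => apply filterdiff_coord1
  | |- filterdiff (fun q => fst (snd q)) _ _ => apply filterdiff_coord2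
  | |- filterdiff (fun q => snd (snd q)) _ _ => apply filterdiff_coord3
  | |- filterdiff (fun q => @?f q + @?g q) _ _ =>
      eapply (filterdiff_Rplus _ f g); [filterdiff_rational | filterdiff_rational]
  | |- filterdiff (fun q => @?f q - @?g q) _ _ =>
      eapply (filterdiff_Rminus _ f g); [filterdiff_rational | filterdiff_rational]
  | |- filterdiff (fun q => @?f q * @?g q) _ _ =>
      eapply (filterdiff_Rmult _ f g); [filterdiff_rational | filterdiff_rational]
  | |- filterdiff (fun q => - @?f q) _ _ => eapply (filterdiff_Ropp _ f); filterdiff_rational
  | |- filterdiff (fun q => @?f q / @?g q) _ _ =>
      eapply (filterdiff_Rdiv _ f g); [filterdiff_rational | filterdiff_rational |]
  | |- filterdiff (fun q => ?c) _ _ => apply filterdiff_Rconst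
  end.

Lemma norm_R3 (h : R3) : norm h = V3norm (V3_of h).
Proof.
  destruct h as [a [b c]].
  unfold V3norm, V3_of; cbn. unfold norm; cbn. unfold prod_norm; cbn.
  unfold norm; cbn. unfold prod_norm, norm; cbn. unfold abs; cbn.
  rewrite !Rmult_1_r, sqrt_sqrt by nra.
  f_equal. rewrite <- !Rabs_mult, !Rabs_right by nra. ring.
Qed.

Lemma minus_plus_R3 (p h : R3) : minus (plus p h) p = h.
Proof.
  destruct p as [p1 [p2 p3]], h as [h1 [h2 h3]].
  unfold minus, plus, opp; cbn. unfold prod_plus, prod_opp; cbn.
  unfold plus, opp; cbn. unfold prod_plus, prod_opp; cbn. unfold plus, opp; cbn.
  f_equal; [|f_equal]; ring.
Qed.

Lemma filterdiff_remainder_bound (F : R3 -> R) (p : R3) (l : R3 -> R) :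
  filterdiff F (locally p) l -> forall eps, 0 < eps -> exists delta, 0 < delta /\
    forall h, norm h < delta -> Rabs (F (plus p h) - F p - l h) <= eps * norm h.
Proof.
  intros [_ Hd] eps Heps.
  destruct (Hd p (fun P H => H) (mkposreal eps Heps)) as [delta Hdelta].
  exists delta. split; [apply cond_pos|].
  intros h Hh.
  assert (Hball : ball p delta (plus p h)).
  { apply (norm_compat1 (V := prod_NormedModule R_AbsRing R_NormedModule
      (prod_NormedModule R_AbsRing R_NormedModule R_NormedModule))).
    rewrite minus_plus_R3. exact Hh. }
  specialize (Hdelta _ Hball). rewrite minus_plus_R3 in Hdelta. exact Hdelta.
Qed.

Lemma V3norm_le_abs (v : V3) : V3norm v <= Rabs (v1 v) + Rabs (v2 v) + Rabs (v3 v).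
Proof.
  destruct v as [a b c]. unfold V3norm; cbn.
  rewrite <- (sqrt_Rsqr (Rabs a + Rabs b + Rabs c))
    by (pose proof (Rabs_pos a); pose proof (Rabs_pos b); pose proof (Rabs_pos c); lra).
  apply sqrt_le_1_alt.
  pose proof (Rsqr_abs a); pose proof (Rsqr_abs b); pose proof (Rsqr_abs c). unfold Rsqr in *.
  pose proof (Rabs_pos a); pose proof (Rabs_pos b); pose proof (Rabs_pos c). nra.
Qed.

Lemma is_differential_of_filterdiff (f : V3 -> V3) (p : R3) (L : Mat3) :
  (forall i, (i < 3)%nat ->
     filterdiff (fun q => V3nth (f (V3_of q)) i) (locally p) (mat3_row L i)) ->
  is_differential f (V3_of p) L.
Proof.
  intros Hf eps Heps.
  assert (Heps3 : 0 < eps / 3) by lra.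
  destruct (filterdiff_remainder_bound _ _ _ (Hf 0%nat ltac:(lia)) _ Heps3) as [d1 [Hd1 B1]].
  destruct (filterdiff_remainder_bound _ _ _ (Hf 1%nat ltac:(lia)) _ Heps3) as [d2 [Hd2 B2]].
  destruct (filterdiff_remainder_bound _ _ _ (Hf 2%nat ltac:(lia)) _ Heps3) as [d3 [Hd3 B3]].
  exists (Rmin d1 (Rmin d2 d3)). split; [repeat apply Rmin_pos; assumption|].
  intros [h1 h2 h3] [_ Hh].
  set (h := (h1, (h2, h3)) : R3).
  assert (Hnorm : norm h = V3norm (mkV3 h1 h2 h3)) by apply norm_R3.
  rewrite <- Hnorm in Hh |- *.
  specialize (B1 h ltac:(eapply Rlt_le_trans; [exact Hh | apply Rmin_l])).
  specialize (B2 h ltac:(eapply Rlt_le_trans; [exact Hh | eapply Rle_trans; [apply Rmin_r | apply Rmin_l]])).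
  specialize (B3 h ltac:(eapply Rlt_le_trans; [exact Hh | eapply Rle_trans; [apply Rmin_r | apply Rmin_r]])).
  eapply Rle_trans; [apply V3norm_le_abs|].
  assert (Hshift : V3_of (plus p h) = V3add (V3_of p) (mkV3 h1 h2 h3))
    by (destruct p as [? [? ?]]; reflexivity).
  rewrite Hshift in B1, B2, B3. unfold mat3_row in B1, B2, B3. cbn [V3nth fst snd h] in B1, B2, B3.
  cbn [V3sub mat3_apply v1 v2 v3]. lra.
Qed.

Lemma in_SL2C_bottom_row_pos (h : M2) :
  in_SL2C h -> 0 < Cnorm2 (mc h) + Cnorm2 (md h).
Proof.
  destruct h as [[a1 a2] [b1 b2] [c1 c2] [d1 d2]].
  cbv [in_SL2C M2det Cnorm2 Cadd Copp Cmul C1 CR ma mb mc md re im].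
  intros Hdet. injection Hdet as Hdr _.
  destruct (Rle_or_lt (c1 * c1 + c2 * c2 + (d1 * d1 + d2 * d2)) 0) as [H0 | ?]; [|lra].
  assert (c1 = 0 /\ c2 = 0 /\ d1 = 0 /\ d2 = 0) as (-> & -> & -> & ->) by nra.
  lra.
Qed.

Lemma M2det_mul (X Y : M2) : M2det (M2mul X Y) = Cmul (M2det X) (M2det Y).
Proof.
  destruct X as [[a1 a2] [b1 b2] [c1 c2] [d1 d2]], Y as [[p1 p2] [q1 q2] [r1 r2] [s1 s2]].
  cbv [M2det M2mul Cadd Copp Cmul ma mb mc md re im]. f_equal; ring.
Qed.

Lemma in_SL2C_mul (X Y : M2) : in_SL2C X -> in_SL2C Y -> in_SL2C (M2mul X Y).
Proof.
  unfold in_SL2C. intros HX HY. rewrite M2det_mul, HX, HY.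
  cbv [Cmul C1 CR re im]. f_equal; ring.
Qed.

Lemma in_SL2C_nmat (z : Cx) : in_SL2C (nmat z).
Proof. destruct z as [x y]. cbv [in_SL2C M2det nmat Cadd Copp Cmul C0 C1 CR ma mb mc md re im]. f_equal; ring. Qed.

Lemma in_SL2C_amat (mu : R) : 0 < mu -> in_SL2C (amat mu).
Proof.
  intros Hmu. assert (sqrt mu <> 0) by (apply Rgt_not_eq, sqrt_lt_R0, Hmu).
  cbv [in_SL2C M2det amat Cadd Copp Cmul C0 C1 CR ma mb mc md re im]. f_equal; field; assumption.
Qed.

Definition M2scal (t : R) (X : M2) : M2 :=
  mkM2 (Cscal t (ma X)) (Cscal t (mb X)) (Cscal t (mc X)) (Cscal t (md X)).

Definition su2_of_row (r s : Cx) : M2 := mkM2 (Cconj s) (Copp (Cconj r)) r s.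

Definition iwasawa_K (r s : Cx) : M2 :=
  M2scal (/ sqrt (Cnorm2 r + Cnorm2 s)) (su2_of_row r s).

Lemma Phi_M2scal (t : R) (X : M2) (i j : nat) : Phi (M2scal t X) i j = t * t * Phi X i j.
Proof.
  destruct X as [[a1 a2] [b1 b2] c d].
  destruct i as [|[|[|i]]]; destruct j as [|[|[|j]]];
    cbv [Phi M2scal Cnorm2 Cscal Cadd Copp Cmul Cconj ma mb re im]; ring.
Qed.

Lemma su2_of_row_scal (t : R) (r s : Cx) :
  su2_of_row (Cscal t r) (Cscal t s) = M2scal t (su2_of_row r s).
Proof.
  destruct r as [r1 r2], s as [s1 s2].
  cbv [su2_of_row M2scal Cscal Cconj Copp ma mb mc md re im]. f_equal; f_equal; ring.
Qed.

Lemma in_SU2_su2_of_row (K : M2) :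
  in_SU2 K -> K = su2_of_row (mc K) (md K) /\ Cnorm2 (mc K) + Cnorm2 (md K) = 1.
Proof.
  destruct K as [[a1 a2] [b1 b2] [c1 c2] [d1 d2]].
  cbv [in_SU2 M2mul M2adj M2id M2det Cadd Copp Cmul Cconj C1 C0 CR ma mb mc md re im].
  intros [HK Hdet]. injection HK as H11r H11i H12r H12i H21r H21i H22r H22i.
  injection Hdet as Hdr Hdi.
  cbv [su2_of_row Cnorm2 Cconj Copp ma mb mc md re im].
  split; [f_equal; f_equal|]; nsatz.
Qed.

Lemma iwasawa_bottom_row (h : M2) (w : Cx) (mu : R) (K : M2) :
  iwasawa h w mu K -> mc K = Cscal (sqrt mu) (mc h) /\ md K = Cscal (sqrt mu) (md h).
Proof.
  intros [Hmu [_ ->]].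
  assert (Hm : sqrt mu <> 0) by (apply Rgt_not_eq, sqrt_lt_R0, Hmu).
  destruct K as [ka kb [kc1 kc2] [kd1 kd2]].
  cbv [M2mul nmat amat Cscal Cadd Cmul C0 C1 CR ma mb mc md re im].
  split; f_equal; field; exact Hm.
Qed.

Lemma inv_sqrt_of_sq_mul (m N : R) : 0 < m -> m * m * N = 1 -> m = / sqrt N.
Proof.
  intros Hm HmN.
  assert (HN : N = / (m * m)) by (field_simplify_eq; [lra | nra]).
  rewrite HN, sqrt_inv, sqrt_square by lra. field. lra.
Qed.

Lemma iwasawa_K_unique (h : M2) (w : Cx) (mu : R) (K : M2) :
  iwasawa h w mu K -> K = iwasawa_K (mc h) (md h).
Proof.
  intros Hiw.
  destruct (iwasawa_bottom_row h w mu K Hiw) as [Hc Hd].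
  destruct Hiw as [Hmu [HK _]].
  destruct (in_SU2_su2_of_row K HK) as [HKrow Hnorm].
  assert (Hm : sqrt mu = / sqrt (Cnorm2 (mc h) + Cnorm2 (md h))).
  { apply inv_sqrt_of_sq_mul; [apply sqrt_lt_R0, Hmu|].
    rewrite Hc, Hd in Hnorm. rewrite <- Hnorm.
    destruct (mc h) as [r1 r2], (md h) as [s1 s2]. cbv [Cnorm2 Cscal re im]. ring. }
  rewrite HKrow, Hc, Hd, su2_of_row_scal, Hm. reflexivity.
Qed.

(* The unipotent part is read off from h K^* = n[w] a[mu]. *)
Lemma iwasawa_decomposition (h : M2) :
  in_SL2C h ->
  let N := Cnorm2 (mc h) + Cnorm2 (md h) in
  iwasawa h (Cscal (/ N) (Cadd (Cmul (ma h) (Cconj (mc h))) (Cmul (mb h) (Cconj (md h)))))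
    (/ N) (iwasawa_K (mc h) (md h)).
Proof.
  intros Hdet N.
  assert (HN : 0 < N) by exact (in_SL2C_bottom_row_pos h Hdet).
  set (t := sqrt N).
  assert (Ht : 0 < t) by (apply sqrt_lt_R0, HN).
  assert (Htt : t * t = N) by (apply sqrt_sqrt; lra).
  split; [apply Rinv_0_lt_compat, HN|].
  unfold iwasawa_K. fold N. fold t.
  assert (HinvN : / N = / t * / t) by (rewrite <- Htt; field; lra).
  assert (Hsqrt : sqrt (/ N) = / t) by (unfold t; rewrite sqrt_inv; reflexivity).
  unfold amat. rewrite Hsqrt, Rinv_inv, HinvN.
  set (ti := / t) in *.
  assert (Htti : t * ti = 1) by (unfold ti; field; lra).
  clearbody ti. unfold N in Htt. clearbody t. clear Hsqrt HinvN HN Ht N.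
  destruct h as [[a1 a2] [b1 b2] [c1 c2] [d1 d2]].
  cbv [in_SL2C M2det Cnorm2 Cadd Copp Cmul C1 CR ma mb mc md re im] in Hdet, Htt.
  injection Hdet as Hdr Hdi.
  split.
  - cbv [in_SU2 M2mul M2adj M2id M2det M2scal su2_of_row Cscal Cadd Copp Cmul Cconj C1 C0 CR ma mb mc md re im].
    split; f_equal; f_equal; nsatz.
  - cbv [M2mul M2scal su2_of_row nmat Cscal Cadd Copp Cmul Cconj C1 C0 CR ma mb mc md re im].
    f_equal; f_equal; nsatz.
Qed.

Definition act_den (S : M2) (z : Cx) (l : R) : R :=
  Cnorm2 (Cadd (Cmul (mc S) z) (md S)) + Cnorm2 (mc S) * (l * l).

Lemma act_den_pos (S : M2) (z : Cx) (l : R) : in_SL2C S -> 0 < l -> 0 < act_den S z l.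
Proof.
  intros HS Hl.
  pose proof (in_SL2C_bottom_row_pos S HS) as Hrow.
  destruct S as [a b [c1 c2] [d1 d2]], z as [x y].
  unfold act_den, Cnorm2 in *; cbv [Cadd Cmul mc md re im] in *.
  assert (Hl2 : 0 < l * l) by nra.
  destruct (Rle_or_lt (c1 * c1 + c2 * c2) 0) as [Hc | Hc].
  - assert (c1 = 0 /\ c2 = 0) as [-> ->] by nra. nra.
  - pose proof (Rmult_lt_0_compat _ _ Hc Hl2).
    pose proof (Rle_0_sqr (c1 * x - c2 * y + d1)); pose proof (Rle_0_sqr (c1 * y + c2 * x + d2)).
    unfold Rsqr in *. lra.
Qed.

Lemma Imh_act (S : M2) (z : Cx) (l : R) : Imh (act S (hpoint z l)) = l / act_den S z l.
Proof. destruct z. reflexivity. Qed.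

(* Rows 0 and 1 carry the factor [M2det S]: on the boundary the action is the Moebius map
   z |-> (a z + b) / (c z + d), whose complex derivative is det S / (c z + d)^2. *)
Definition act_jacobian (S : M2) (z : Cx) (l : R) : Mat3 :=
  let u := Cadd (Cmul (mc S) z) (md S) in
  let ur := re u in let ui := im u in
  let cr := re (mc S) in let ci := im (mc S) in
  let E : Mat3 := fun i j =>
    match i, j with
    | 0%nat, 0%nat => ur*ur - ui*ui - l*l*(cr*cr - ci*ci)
    | 0%nat, 1%nat => 2*ur*ui + 2*l*l*cr*ci
    | 0%nat, 2%nat => 2*l*(ur*cr - ui*ci)
    | 1%nat, 0%nat => -2*ur*ui + 2*l*l*cr*ci
    | 1%nat, 1%nat => ur*ur - ui*ui + l*l*(cr*cr - ci*ci)
    | 1%nat, 2%nat => -2*l*(ur*ci + ui*cr)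
    | 2%nat, 0%nat => -2*l*(ur*cr + ui*ci)
    | 2%nat, 1%nat => 2*l*(ur*ci - ui*cr)
    | 2%nat, 2%nat => ur*ur + ui*ui - l*l*(cr*cr + ci*ci)
    | _, _ => 0
    end in
  let dr := re (M2det S) in let di := im (M2det S) in
  let D := act_den S z l in
  fun i j =>
    match i with
    | 0%nat => dr * E 0%nat j - di * E 1%nat j
    | 1%nat => di * E 0%nat j + dr * E 1%nat j
    | _ => E i j
    end / (D * D).

Lemma act_differential (S : M2) (z : Cx) (l : R) :
  act_den S z l <> 0 -> is_differential (act S) (hpoint z l) (act_jacobian S z l).
Proof.
  intros HD.
  change (hpoint z l) with (V3_of (re z, (im z, l))).
  apply is_differential_of_filterdiff.
  destruct S as [[a1 a2] [b1 b2] [c1 c2] [d1 d2]], z as [x y].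
  unfold act_den in HD; cbv [Cnorm2 Cadd Cmul ma mb mc md re im] in HD.
  intros i Hi. destruct i as [|[|[|i]]]; [| | | lia];
    (eapply filterdiff_ext_lin;
     [ cbv [V3nth act V3_of Cnorm2 Cadd Cmul Cconj Cscal ma mb mc md re im v1 v2 v3];
       filterdiff_rational; exact HD
     | intros [h1 [h2 h3]];
       cbv [mat3_row act_jacobian act_den M2det V3_of Cnorm2 Cadd Copp Cmul ma mb mc md re im fst snd];
       lazymatch goal with |- ?lhs = ?rhs => change (@eq R lhs rhs) end;
       field; exact HD]).
Qed.

Lemma bottom_row_mul_nmat_amat (S : M2) (z : Cx) (l : R) :
  0 < l ->
  let h := M2mul S (M2mul (nmat z) (amat l)) in
  mc h = Cscal (sqrt l) (mc S) /\ md h = Cscal (/ sqrt l) (Cadd (Cmul (mc S) z) (md S)).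
Proof.
  intros Hl h.
  assert (sqrt l <> 0) by (apply Rgt_not_eq, sqrt_lt_R0, Hl).
  destruct S as [a b [c1 c2] [d1 d2]], z as [x y].
  cbv [h M2mul nmat amat Cscal Cadd Cmul C0 C1 CR ma mb mc md re im].
  split; f_equal; field; assumption.
Qed.

Lemma conj_Phi_iwasawa_K (S : M2) (z : Cx) (l : R) :
  in_SL2C S -> 0 < l ->
  let h := M2mul S (M2mul (nmat z) (amat l)) in
  forall i j, (i < 3)%nat -> (j < 3)%nat ->
    mat3_mul Bmat (mat3_mul (Phi (iwasawa_K (mc h) (md h))) Bmat) i j
    = act_den S z l * act_jacobian S z l i j.
Proof.
  intros HS Hl h i j Hi Hj.
  pose proof (act_den_pos S z l HS Hl) as HD.
  destruct (bottom_row_mul_nmat_amat S z l Hl) as [Hc Hd]. fold h in Hc, Hd.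
  set (s := sqrt l) in Hc, Hd.
  assert (Hs : 0 < s) by (apply sqrt_lt_R0, Hl).
  assert (Hss : l = s * s) by (symmetry; apply sqrt_sqrt; lra).
  assert (HN : Cnorm2 (mc h) + Cnorm2 (md h) = act_den S z l / (s * s)).
  { rewrite Hc, Hd. unfold act_den. rewrite Hss.
    destruct (mc S) as [c1 c2], (md S) as [d1 d2], z as [x y]. cbv [Cnorm2 Cscal Cadd Cmul re im]. field. lra. }
  assert (Hscale : / sqrt (Cnorm2 (mc h) + Cnorm2 (md h)) * / sqrt (Cnorm2 (mc h) + Cnorm2 (md h))
                   = s * s / act_den S z l).
  { rewrite <- Rinv_mult, sqrt_sqrt, HN by (rewrite HN; apply Rlt_le, Rdiv_lt_0_compat; nra).
    field. split; lra. }
  unfold iwasawa_K, mat3_mul. rewrite !Phi_M2scal, Hscale, Hc, Hd.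
  unfold act_jacobian. rewrite HS. clearbody s. subst l.
  unfold act_den in HD |- *.
  destruct S as [a b [c1 c2] [d1 d2]], z as [x y].
  destruct i as [|[|[|i]]]; [| | | lia]; destruct j as [|[|[|j]]]; try lia;
    cbv [Bmat Phi su2_of_row Cnorm2 Cscal Cadd Copp Cmul Cconj C1 CR ma mb mc md re im] in HD |- *;
    field; split; lra.
Qed.

Theorem mainTheorem3 (sigma : M2) (z : Cx) (lambda : R) :
  in_SL2C sigma -> 0 < lambda ->
  let g := M2mul (nmat z) (amat lambda) in
  let P := hpoint z lambda in
  (exists w mu K, iwasawa (M2mul sigma g) w mu K) /\
  (forall w mu K, iwasawa (M2mul sigma g) w mu K ->
     is_R sigma P (mat3_mul Bmat (mat3_mul (Phi K) Bmat))).
Proof.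
  intros HS Hl g P. subst g P.
  assert (Hh : in_SL2C (M2mul sigma (M2mul (nmat z) (amat lambda))))
    by (apply in_SL2C_mul; [exact HS | apply in_SL2C_mul; [apply in_SL2C_nmat | apply in_SL2C_amat, Hl]]).
  pose proof (act_den_pos sigma z lambda HS Hl) as HD.
  split.
  - do 3 eexists. exact (iwasawa_decomposition _ Hh).
  - intros w mu K HK.
    rewrite (iwasawa_K_unique _ _ _ _ HK).
    exists (act_jacobian sigma z lambda). split.
    + apply act_differential. lra.
    + intros i j Hi Hj.
      rewrite (conj_Phi_iwasawa_K sigma z lambda HS Hl i j Hi Hj).
      rewrite Imh_act. cbn [Imh hpoint v3].
      field. lra.
Qed.
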